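(* $\mathrm{Sort}(\mathrm{SC}_{3\underline{21}})$ is a permutation class.
   Context: $\mathfrak S_n$ is the set of permutations of $\{1,\dots,n\}$. A permutation $\pi$ contains a (classical) permutation $\tau$ if some subsequence of $\pi$ has the same relative order as $\tau$. A permutation class is a set $\Pi$ of permutations such that every permutation contained in some $\pi\in\Pi$ is also in $\Pi$. A vincular pattern is a permutation with some entries underlined; a sequence contains it if it has a subsequence with the same relative order in which entries corresponding to adjacent underlined entries occupy consecutive positions. An occurrence of $3\underline{21}$ is $a_i a_j a_{j+1}$ with $i<j$ and $a_{j+1}<a_j<a_i$. For a pattern $\sigma$, the map $\mathrm{SC}_\sigma$ acts on $\tau$: read entries left to right; when the next entry $x$ is read, if pushing $x$ yields a stack whose entries read top to bottom (stack adjacency = consecutive positions) avoid $\sigma$, push $x$; otherwise pop the top stack entry to the output and repeat. At the end pop all remaining entries; the output is $\mathrm{SC}_\sigma(\tau)$. West's stack-sorting map is $s=\mathrm{SC}_{21}$. $\mathrm{Sort}_n(\mathrm{SC}_\sigma)=\{\tau\in\mathfrak S_n : s(\mathrm{SC}_\sigma(\tau))=12\cdots n\}$ and $\mathrm{Sort}(\mathrm{SC}_\sigma)=\bigcup_{n\ge1}\mathrm{Sort}_n(\mathrm{SC}_\sigma)$. *)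

From mathcomp Require Import all_boot.
Set Implicit Arguments. Unset Strict Implicit. Unset Printing Implicit Defensive.

Definition is_perm (s : seq nat) : bool := perm_eq s (iota 1 (size s)).

Definition order_iso (a b : seq nat) : bool :=
  (size a == size b) &&
  all (fun i => all (fun j => (nth 0 a i < nth 0 a j) == (nth 0 b i < nth 0 b j))
                    (iota 0 (size a))) (iota 0 (size a)).

Fixpoint all_subseqs (l : seq nat) : seq (seq nat) :=
  match l with
  | [::] => [:: [::]]
  | x :: l' => let r := all_subseqs l' in [seq x :: t | t <- r] ++ r
  end.

(* A vincular pattern: a permutation p together with a bit u_j for each entry
   telling whether entry j is underlined.  [idx] is an occurrence of (p,u) in s:
   increasing positions, same relative order, and whenever entries j, j+1 of p
   are both underlined, the corresponding positions are consecutive. *)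
Definition vocc (s p : seq nat) (u : seq bool) (idx : seq nat) : bool :=
  [&& size idx == size p, sorted ltn idx, all (fun i => i < size s) idx,
      order_iso (map (nth 0 s) idx) p &
      all (fun j => (nth false u j && nth false u j.+1) ==>
                    (nth 0 idx j.+1 == (nth 0 idx j).+1))
          (iota 0 (size p).-1)].

Definition vcontains (s p : seq nat) (u : seq bool) : bool :=
  has (vocc s p u) (all_subseqs (iota 0 (size s))).

(* classical containment: no underlined entries *)
Definition contains (s p : seq nat) : bool := vcontains s p [::].

(* SC_(p,u): the pattern-avoiding stack machine.  The stack is a list whose head
   is the top.  Reading x: if x :: st avoids the pattern, push; else pop the top
   to the output and repeat. *)
Fixpoint push_loop (p : seq nat) (u : seq bool) (x : nat) (st out : seq nat)
  : seq nat * seq nat :=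
  if ~~ vcontains (x :: st) p u then (x :: st, out) else
  match st with
  | [::] => ([:: x], out)
  | y :: st' => push_loop p u x st' (rcons out y)
  end.

Definition SC (p : seq nat) (u : seq bool) (tau : seq nat) : seq nat :=
  let: (st, out) :=
    foldl (fun acc x => push_loop p u x acc.1 acc.2) ([::], [::]) tau in
  out ++ st.

Definition west_s (tau : seq nat) : seq nat := SC [:: 2; 1] [::] tau.

Definition SC_3_21 (tau : seq nat) : seq nat := SC [:: 3; 2; 1] [:: false; true; true] tau.

Definition Sort_SC (p : seq nat) (u : seq bool) (tau : seq nat) : Prop :=
  0 < size tau /\ is_perm tau /\ west_s (SC p u tau) = iota 1 (size tau).

Definition perm_class (P : seq nat -> Prop) : Prop :=
  (forall pi, P pi -> 0 < size pi /\ is_perm pi) /\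
  (forall pi tau, P pi -> 0 < size tau -> is_perm tau -> contains pi tau -> P tau).

From mathcomp Require Import all_boot zify.
Set Implicit Arguments. Unset Strict Implicit. Unset Printing Implicit Defensive.

(* Sort(SC_{3-21}) is the class Av(123, 132) of permutations in which no entry
   has two larger entries to its right.

   While the input read so far avoids the vincular pattern 12-3 (an adjacent
   ascent a b followed later by some c > b), the stack, which is the reversed
   input, avoids 3-21, so SC_{3-21} pushes every entry and returns the reversal
   of its input.  When an entry x completes the first 12-3, x pops entries
   until the last popped entry e lies above some a with a < e < x; so e, x, a
   leave in this order and form a 231.  As every step merely inserts the new
   entry into the word (output ++ stack), this 231 survives to the end.  By
   Knuth's theorem West's map sorts exactly the 231-avoiding words, so a
   permutation is sorted iff it avoids 12-3 and its reversal avoids 231, i.e.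
   iff it avoids 12-3 and 132.  For permutations this means avoiding 123 and
   132: in an occurrence x..y..z of either pattern, an ascent a b between x
   and y yields a 12-3 (if b < z) or the 132 x..b..z (if b > z).  Finally
   Av(123, 132) is closed under containment. *)

(** * Subsequences and pattern occurrences *)

Lemma subseq_cons_split (x : nat) s t : subseq (x :: s) t ->
  exists t1 t2, t = t1 ++ x :: t2 /\ subseq s t2.
Proof.
elim: t => [|y t IH] //=; case: eqP => [<- sub_st|_ /IH[t1 [t2 [-> sub_st]]]].
  by exists [::], t.
by exists (y :: t1), t2.
Qed.

Lemma subseq3 (x y z : nat) s1 s2 s3 :
  x \in s1 -> y \in s2 -> z \in s3 -> subseq [:: x; y; z] (s1 ++ s2 ++ s3).
Proof.
rewrite -!sub1seq => x_s1 y_s2 z_s3.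
by rewrite -[[:: x; y; z]]/([:: x] ++ [:: y] ++ [:: z]) !cat_subseq.
Qed.

Lemma mem_all_subseqs (s l : seq nat) : (s \in all_subseqs l) = subseq s l.
Proof.
elim: l s => [|y l IH] [|z s] //=; rewrite mem_cat IH ?sub0seq ?orbT //.
case: eqP => [->|ne_zy].
  rewrite mem_map; last by move=> ? ? [].
  by rewrite IH orb_idr // => /(subseq_trans (subseq_cons s y)).
by rewrite orb_idl // => /mapP[? _ [/ne_zy]].
Qed.

Lemma sorted_subseq_iota (s : seq nat) n :
  sorted ltn s -> all (fun i => i < n) s -> subseq s (iota 0 n).
Proof.
move=> s_sorted /allP s_lt.
have -> : s = [seq i <- iota 0 n | i \in s].
  apply: (irr_sorted_eq ltn_trans ltnn) => //.
    by apply: sorted_filter; [exact: ltn_trans | exact: iota_ltn_sorted].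
  move=> i; rewrite mem_filter mem_iota add0n.
  by case: (boolP (i \in s)) => // /s_lt ->.
exact: filter_subseq.
Qed.

Lemma vcontainsP s p u : reflect (exists idx, vocc s p u idx) (vcontains s p u).
Proof.
apply: (iffP hasP) => [[idx _ occ]|[idx occ]]; first by exists idx.
exists idx => //; rewrite mem_all_subseqs.
by case/and5P: occ => _ idx_sorted idx_lt _ _; apply: sorted_subseq_iota.
Qed.

Lemma order_isoE a b : order_iso a b =
  (size a == size b) && all2rel (fun p q => (p.1 < q.1) == (p.2 < q.2)) (zip a b).
Proof.
rewrite /order_iso; case: eqP => //= eq_ab.
rewrite -[zip a b](mkseq_nth (0, 0)) size1_zip ?eq_ab //.
rewrite /allrel all_map; apply: eq_all => i /=; rewrite all_map; apply: eq_all => j /=.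
by rewrite !nth_zip.
Qed.

Lemma order_iso_mask m a b : order_iso a b -> order_iso (mask m a) (mask m b).
Proof.
rewrite !order_isoE => /andP[/eqP eq_ab rel_ab].
have -> : mask m a = unzip1 (mask m (zip a b)).
  by rewrite [RHS]map_mask -/(unzip1 _) unzip1_zip ?eq_ab.
have -> : mask m b = unzip2 (mask m (zip a b)).
  by rewrite [RHS]map_mask -/(unzip2 _) unzip2_zip ?eq_ab.
by rewrite zip_unzip !size_map eqxx /=; apply/allrel_maskl/allrel_maskr.
Qed.

Lemma contains_subseq pi tau s : contains pi tau -> subseq s tau ->
  exists2 s', subseq s' pi & order_iso s' s.
Proof.
case/vcontainsP=> idx /and5P[_ idx_sorted idx_lt idx_iso _] /subseqP[m _ ->].
exists (mask m (map (nth 0 pi) idx)); last exact: order_iso_mask.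
apply: subseq_trans (mask_subseq _ _) _.
rewrite -[X in subseq _ X](mkseq_nth 0 pi); apply: map_subseq.
exact: sorted_subseq_iota.
Qed.

Lemma order_iso_21 u v : order_iso [:: u; v] [:: 2; 1] = (v < u).
Proof. rewrite /order_iso /=; lia. Qed.

Lemma order_iso_321 u v w : order_iso [:: u; v; w] [:: 3; 2; 1] = (w < v < u).
Proof. rewrite /order_iso /=; lia. Qed.

Lemma vcontains_21E s : vcontains s [:: 2; 1] [::] = ~~ pairwise leq s.
Proof.
have -> : pairwise leq s = ~~ vcontains s [:: 2; 1] [::]; last by rewrite negbK.
apply/(pairwiseP 0)/negP => [s_sorted /vcontainsP[[|i [|j [|? ?]]] //]|no_occ i j].
  case/and5P => _ /andP[lt_ij _] /and3P[lt_i lt_j _]; rewrite order_iso_21 => lt_ji _.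
  by have := s_sorted i j lt_i lt_j lt_ij; rewrite leqNgt lt_ji.
rewrite !inE => lt_i lt_j lt_ij; rewrite leqNgt; apply/negP => lt_ji.
apply: no_occ; apply/vcontainsP; exists [:: i; j].
by rewrite /vocc /= lt_ij lt_i lt_j order_iso_21 lt_ji.
Qed.

Notation has_3_21 s := (vcontains s [:: 3; 2; 1] [:: false; true; true]).

Lemma has_3_21P s : reflect
  (exists s1 (b a : nat) s2 c, [/\ s = s1 ++ b :: a :: s2, c \in s1 & a < b < c])
  (has_3_21 s).
Proof.
apply: (iffP (vcontainsP _ _ _)) => [[[|i [|j [|k [|? ?]]]] //]|].
  case/and5P => _ /and3P[lt_ij lt_jk _] /and4P[_ lt_j lt_k _].
  rewrite order_iso_321 /= => lt_kji /andP[/eqP def_k _]; subst k.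
  exists (take j s), (nth 0 s j), (nth 0 s j.+1), (drop j.+2 s), (nth 0 s i); split=> //.
    by rewrite -(drop_nth 0 lt_k) -(drop_nth 0 lt_j) cat_take_drop.
  by rewrite -(nth_take 0 lt_ij) mem_nth // size_take lt_j.
move=> [s1 [b [a [s2 [c [-> c_in lt_abc]]]]]].
have lt_c : index c s1 < size s1 by rewrite index_mem.
exists [:: index c s1; size s1; (size s1).+1].
rewrite /vocc /= size_cat /= lt_c ltnSn eqxx !andbT.
have -> : nth 0 (s1 ++ b :: a :: s2) (size s1) = b by rewrite nth_cat ltnn subnn.
have -> : nth 0 (s1 ++ b :: a :: s2) (size s1).+1 = a.
  by rewrite nth_cat ltnNge leqnSn subSnn.
by rewrite nth_cat lt_c nth_index // order_iso_321 lt_abc andbT /=; lia.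
Qed.

Lemma has_3_21_size s : has_3_21 s -> 2 < size s.
Proof.
by case/has_3_21P => [[|? s1] [? [? [s2 [? [-> //]]]]]]; rewrite /= size_cat /= !addnS.
Qed.

Lemma has_3_21_catl s1 s2 : has_3_21 s2 -> has_3_21 (s1 ++ s2).
Proof.
case/has_3_21P => t1 [b [a [t2 [c [-> c_in lt_abc]]]]]; apply/has_3_21P.
by exists (s1 ++ t1), b, a, t2, c; rewrite catA mem_cat c_in orbT.
Qed.

Lemma has_3_21_cons2 x y s : has_3_21 (x :: y :: s) ->
  ~~ has_3_21 (x :: s) -> ~~ has_3_21 (y :: s) -> exists a s', s = a :: s' /\ a < y < x.
Proof.
case/has_3_21P => [[|z [|z' t1]]] [b [a [t2 [c [//= [-> -> ->] c_in lt_abc]]]]].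
  by move: c_in lt_abc; rewrite inE => /eqP-> lt_abc _ _; exists a, t2.
have occ w : c \in w :: t1 -> has_3_21 (w :: t1 ++ b :: a :: t2).
  by move=> c_in'; apply/has_3_21P; exists (w :: t1), b, a, t2, c.
move: c_in; rewrite !inE => /or3P[/eqP c_z|/eqP c_z'|c_t1].
- by rewrite occ // c_z mem_head.
- by move=> _; rewrite occ // c_z' mem_head.
- by rewrite occ // inE c_t1 orbT.
Qed.

(** * Pattern-avoiding stack machines *)

Definition sc_step p u (acc : seq nat * seq nat) x := push_loop p u x acc.1 acc.2.

Definition sc_output (acc : seq nat * seq nat) := acc.2 ++ acc.1.

Lemma SCE p u tau : SC p u tau = sc_output (foldl (sc_step p u) ([::], [::]) tau).
Proof. by rewrite /SC; case: foldl. Qed.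

Lemma push_loop_push p u x st out :
  ~~ vcontains (x :: st) p u -> push_loop p u x st out = (x :: st, out).
Proof. by case: st => [|y st] /= ->. Qed.

Lemma push_loop_spec p u x st out : exists k, [/\ k <= size st,
  push_loop p u x st out = (x :: drop k st, out ++ take k st),
  forall i, i < k -> vcontains (x :: drop i st) p u &
  k < size st -> ~~ vcontains (x :: drop k st) p u].
Proof.
elim: st out => [|y st IH] out /=.
  by exists 0; split=> //; case: ifP; rewrite cats0.
case: ifPn => [pushed|popped]; first by exists 0; rewrite drop0 take0 cats0.
have [k [le_k -> popped_k pushed_k]] := IH (rcons out y).
exists k.+1; split=> //; first by rewrite cat_rcons.
by case=> [_|i /popped_k //]; rewrite drop0 -(negbK (vcontains _ _ _)).
Qed.

Lemma subseq_sc_output_step p u acc x :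
  subseq (sc_output acc) (sc_output (sc_step p u acc x)).
Proof.
case: acc => st out; have [k [_ step _ _]] := push_loop_spec p u x st out.
rewrite /sc_output /sc_step /= step -{1}(cat_take_drop k st) -catA subseq_cat2l.
by rewrite subseq_cat2l subseq_cons.
Qed.

Lemma sc_output_foldl p u st out r : exists2 rest,
  sc_output (foldl (sc_step p u) (st, out) r) = out ++ rest & perm_eq rest (st ++ r).
Proof.
elim: r st out => [|x r IH] st out /=; first by exists st; rewrite ?cats0.
have [k [_ step _ _]] := push_loop_spec p u x st out.
rewrite {2}/sc_step /= step.
have [rest -> perm_rest] := IH (x :: drop k st) (out ++ take k st).
exists (take k st ++ rest); first by rewrite catA.
rewrite -{2}(cat_take_drop k st) -catA perm_cat2l (perm_trans perm_rest) //.
by rewrite -[(x :: _) ++ r]/([:: x] ++ drop k st ++ r) perm_catCA.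
Qed.

Lemma SC_perm p u tau : perm_eq (SC p u tau) tau.
Proof. by rewrite SCE; have [rest -> ] := sc_output_foldl p u [::] [::] tau. Qed.

(** * West's stack-sorting map *)

Notation west_step := (sc_step [:: 2; 1] [::]).

Lemma west_step_spec x st out : pairwise leq st -> exists k, [/\
  west_step (st, out) x = (x :: drop k st, out ++ take k st),
  pairwise leq (x :: drop k st) & all (fun y => y < x) (take k st)].
Proof.
move=> st_sorted; have [k [le_k step popped pushed]] := push_loop_spec [:: 2; 1] [::] x st out.
exists k; split=> //.
  case: (ltnP k (size st)) => [/pushed|ge_k]; first by rewrite vcontains_21E negbK.
  by rewrite drop_oversize.
apply/(all_nthP 0) => i; rewrite size_takel // => lt_ik.
have lt_i : i < size st := leq_trans lt_ik le_k.
have drop_sorted : pairwise leq (drop i st) := subseq_pairwise (drop_subseq st i) st_sorted.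
move: (popped i lt_ik); rewrite nth_take // vcontains_21E pairwise_cons drop_sorted andbT.
case/allPn => y y_in; rewrite -ltnNge; apply: leq_ltn_trans.
move: drop_sorted y_in; rewrite (drop_nth 0 lt_i) pairwise_cons inE.
by case/andP => /allP head_le _ /predU1P[->|/head_le].
Qed.

Lemma west_stack_sorted r st out :
  pairwise leq st -> pairwise leq (foldl west_step (st, out) r).1.
Proof.
elim: r st out => [|x r IH] st out //= st_sorted.
by have [k [-> sorted_k _]] := west_step_spec x out st_sorted; apply: IH.
Qed.

Definition has231 (w : seq nat) := exists b c a : nat, subseq [:: b; c; a] w /\ a < b < c.

Lemma has231_subseq v w : subseq v w -> has231 v -> has231 w.
Proof.
by move=> sub_vw [b [c [a [sub_v lt_abc]]]]; exists b, c, a; rewrite (subseq_trans sub_v).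
Qed.

Lemma west_s_231_unsorted w : has231 w -> ~~ sorted leq (west_s w).
Proof.
case=> b [c [a [sub_bca /andP[lt_ab lt_bc]]]].
have [w0 [w' [-> /subseq_cons_split[w1 [w2 [-> ]]]]]] := subseq_cons_split sub_bca.
rewrite sub1seq => a_w2.
rewrite /west_s SCE -[b :: _]/((b :: w1) ++ c :: w2) catA foldl_cat.
set pre := w0 ++ b :: w1.
case def_acc: (foldl west_step ([::], [::]) pre) => [st out].
have st_sorted : pairwise leq st.
  by rewrite -[st]/((st, out).1) -def_acc west_stack_sorted.
have b_in : b \in out ++ st.
  have [rest /= out_st] := sc_output_foldl [:: 2; 1] [::] [::] [::] pre.
  rewrite def_acc in out_st; rewrite -out_st => /perm_mem ->.
  by rewrite mem_cat mem_head orbT.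
have [k [/= step c_sorted _]] := west_step_spec c out st_sorted.
rewrite /= {1}/sc_step /= step.
have b_popped : b \in out ++ take k st.
  move: b_in; rewrite -{1}(cat_take_drop k st) catA mem_cat => /orP[//|b_in].
  by move: c_sorted => /andP[/allP/(_ b b_in)]; rewrite leqNgt lt_bc.
have [rest -> perm_rest] := sc_output_foldl [:: 2; 1] [::] (c :: drop k st) (out ++ take k st) w2.
have a_rest : a \in rest by rewrite (perm_mem perm_rest) mem_cat a_w2 orbT.
rewrite (sorted_pairwise leq_trans) pairwise_cat.
by apply/negP => /and3P[/allrelP/(_ b a b_popped a_rest)]; rewrite leqNgt lt_ab.
Qed.

(* The run on the input [s ++ r], after the prefix [s] has been read. *)
Lemma west_foldl_sorted (s r st out : seq nat) :
  ~ has231 (s ++ r) -> {subset st <= s} ->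
  pairwise leq out -> pairwise leq st -> allrel leq out (st ++ r) ->
  pairwise leq (sc_output (foldl west_step (st, out) r)).
Proof.
elim: r s st out => [|x r IH] s st out no231 st_s out_sorted st_sorted out_le /=.
  by rewrite /sc_output pairwise_cat out_sorted st_sorted -(cats0 st) out_le.
have [k [-> pushed_sorted popped_lt]] := west_step_spec x out st_sorted.
move/allrelP: out_le => out_le.
have popped_le_stack : allrel leq (take k st) (drop k st).
  by move: st_sorted; rewrite -{1}(cat_take_drop k st) pairwise_cat => /and3P[].
have popped_le_rest : allrel leq (take k st) r.
  apply/allrelP => o y o_popped y_r; rewrite leqNgt; apply/negP => lt_yo.
  apply: no231; exists o, x, y; split; last by rewrite lt_yo (allP popped_lt).
  exact: subseq3 (st_s _ (mem_take o_popped)) (mem_head x [::]) y_r.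
have out_le_stack : {subset (x :: drop k st) ++ r <= st ++ x :: r}.
  by move=> y; rewrite /= !(inE, mem_cat) => /or3P[->|/mem_drop->|->]; rewrite ?orbT.
apply: (IH (rcons s x)) => //.
- by rewrite cat_rcons.
- by move=> y; rewrite inE mem_rcons inE => /predU1P[->|/mem_drop/st_s->]; rewrite ?eqxx ?orbT.
- rewrite pairwise_cat out_sorted (subseq_pairwise (take_subseq st k) st_sorted) !andbT.
  apply/allrelP => o y o_out y_popped; apply: out_le => //.
  by rewrite mem_cat (mem_take y_popped).
rewrite allrel_catl; apply/andP; split.
  by apply/allrelP => o y o_out /out_le_stack; apply: out_le.
rewrite allrel_catr allrel_consr popped_le_stack popped_le_rest !andbT.
by apply: sub_all popped_lt => o; apply: ltnW.
Qed.

Lemma west_s_sortedP w : sorted leq (west_s w) <-> ~ has231 w.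
Proof.
split=> [w_sorted /west_s_231_unsorted|no231]; first by rewrite w_sorted.
rewrite /west_s SCE (sorted_pairwise leq_trans).
exact: (west_foldl_sorted (s := [::])).
Qed.

(** * The machine SC_{3-21} *)

Definition has12_3 (t : seq nat) := exists s1 (a b : nat) s2 c,
  [/\ t = s1 ++ a :: b :: s2, c \in s2 & a < b < c].

Lemma has12_3P t : reflect (has12_3 t) (has_3_21 (rev t)).
Proof.
have rev_split s1 s2 (x y : nat) : rev (s1 ++ x :: y :: s2) = rev s2 ++ y :: x :: rev s1.
  by rewrite rev_cat !rev_cons -!cats1 -!catA.
apply: (iffP (has_3_21P _)) => [[s1 [b [a [s2 [c [def c_in lt_abc]]]]]]|].
  by exists (rev s2), a, b, (rev s1), c; rewrite -[t]revK def rev_split mem_rev.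
move=> [s1 [a [b [s2 [c [-> c_in lt_abc]]]]]].
by exists (rev s2), b, a, (rev s1), c; rewrite rev_split mem_rev.
Qed.

Lemma has12_3_rcons t x : has12_3 t -> has12_3 (rcons t x).
Proof.
move=> [s1 [a [b [s2 [c [-> c_in lt_abc]]]]]].
by exists s1, a, b, (rcons s2 x), c; rewrite rcons_cat mem_rcons inE c_in orbT.
Qed.

Notation sc321_step := (sc_step [:: 3; 2; 1] [:: false; true; true]).

Lemma SC_3_21_foldl_rev s : ~ has12_3 s -> foldl sc321_step ([::], [::]) s = (rev s, [::]).
Proof.
elim/last_ind: s => [//|s x IH] no12_3.
rewrite foldl_rcons IH; last by move/(has12_3_rcons x).
rewrite /sc_step push_loop_push ?rev_rcons //.
by apply/negP; rewrite -rev_rcons => /has12_3P.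
Qed.

Lemma SC_3_21_rev t : ~ has12_3 t -> SC_3_21 t = rev t.
Proof. by move=> no12_3; rewrite /SC_3_21 SCE SC_3_21_foldl_rev. Qed.

Lemma sc321_step_231 x st out : ~~ has_3_21 st -> has_3_21 (x :: st) ->
  has231 (sc_output (sc321_step (st, out) x)).
Proof.
move=> st_ok x_bad.
have [k [le_k step popped pushed]] := push_loop_spec [:: 3; 2; 1] [:: false; true; true] x st out.
have pushed_ok : ~~ has_3_21 (x :: drop k st).
  case: (ltnP k (size st)) => [/pushed //|ge_k].
  by rewrite drop_oversize //; apply/negP => /has_3_21_size.
rewrite /sc_step /= step /sc_output /=.
case: k le_k popped pushed_ok {step pushed} => [|j lt_j popped pushed_ok].
  by rewrite drop0 x_bad.
set e := nth 0 st j.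
have drop_j : drop j st = e :: drop j.+1 st := drop_nth 0 lt_j.
have e_ok : ~~ has_3_21 (e :: drop j.+1 st).
  by apply: contra st_ok; rewrite -drop_j -{2}(cat_take_drop j st); apply: has_3_21_catl.
have := popped j (ltnSn j); rewrite drop_j => /has_3_21_cons2/(_ pushed_ok e_ok).
case=> a [s' [-> lt_aex]]; exists e, x, a; split=> //.
rewrite (take_nth 0 lt_j) -[x :: a :: s']/([:: x] ++ a :: s').
by apply: subseq3; rewrite ?mem_cat ?mem_rcons mem_head ?orbT.
Qed.

Lemma SC_3_21_231 t : has12_3 t -> has231 (SC_3_21 t).
Proof.
rewrite /SC_3_21 SCE; elim/last_ind: t => [[[|? ?] [? [? [? [? []]]]]] //|s x IH h12_3].
rewrite foldl_rcons.
have [/has12_3P s_bad|s_ok] := boolP (has_3_21 (rev s)).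
  exact: has231_subseq (subseq_sc_output_step _ _ _ _) (IH s_bad).
rewrite SC_3_21_foldl_rev; last by move/has12_3P; apply/negP.
by apply: sc321_step_231 => //; rewrite -rev_rcons; apply/has12_3P.
Qed.

(** * The class Av(123, 132) *)

Definition has132 (t : seq nat) := exists a c b : nat, subseq [:: a; c; b] t /\ a < b < c.

Lemma has231_rev t : has231 (rev t) <-> has132 t.
Proof.
split=> [[b [c [a [sub lt_abc]]]]|[a [c [b [sub lt_abc]]]]].
  by exists a, c, b; rewrite -subseq_rev.
by exists b, c, a; rewrite -subseq_rev revK.
Qed.

Definition avoids_123_132 (t : seq nat) :=
  forall x y z, subseq [:: x; y; z] t -> ~~ ((x < y) && (x < z)).

Lemma ascent_split (x : nat) s : x < last x s ->
  exists s1 a b s2, [/\ x :: s = s1 ++ a :: b :: s2, b \in s & a < b].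
Proof.
elim: s x => [|y s IH] x /=; first by rewrite ltnn.
case: (ltnP x y) => [lt_xy _|le_yx /(leq_ltn_trans le_yx)/IH].
  by exists [::], x, y, s; rewrite mem_head.
case=> s1 [a [b [s2 [def b_in lt_ab]]]].
exists (x :: s1), a, b, s2; split=> //; first by rewrite /= def.
by rewrite inE b_in orbT.
Qed.

Lemma avoids_123_132P t : uniq t -> avoids_123_132 t <-> ~ has12_3 t /\ ~ has132 t.
Proof.
move=> t_uniq; split=> [avoid | [no12_3 no132] x y z sub_xyz].
  split=> [[s1 [a [b [s2 [c [def c_in /andP[lt_ab lt_bc]]]]]]]|].
    have sub : subseq [:: a; b; c] t.
      rewrite def -[_ :: b :: s2]/([:: a] ++ [:: b] ++ s2) catA.
      by rewrite subseq3 ?mem_cat ?mem_head ?orbT.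
    by move: (avoid a b c sub); rewrite lt_ab (ltn_trans lt_ab lt_bc).
  move=> [a [c [b [sub /andP[lt_ab lt_bc]]]]].
  by move: (avoid a c b sub); rewrite lt_ab (ltn_trans lt_ab lt_bc).
apply/negP => /andP[lt_xy lt_xz].
have [A [t' [def_t /subseq_cons_split[B [C [def_t' ]]]]]] := subseq_cons_split sub_xyz.
rewrite sub1seq => z_C.
have lt_seg : x < last x (rcons B y) by rewrite last_rcons.
have [s1 [a [b [s2 [def_seg b_in lt_ab]]]]] := ascent_split lt_seg.
have def_seg_t : t = (A ++ x :: rcons B y) ++ C by rewrite def_t def_t' -catA /= cat_rcons.
case: (ltngtP b z) => [lt_bz|lt_zb|eq_bz].
- apply: no12_3; exists (A ++ s1), a, b, (s2 ++ C), z; split.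
  + by rewrite def_seg_t def_seg -!catA.
  + by rewrite mem_cat z_C orbT.
  + by rewrite lt_ab lt_bz.
- apply: no132; exists x, b, z; split; last by rewrite lt_xz.
  rewrite def_seg_t -[A ++ x :: _]/(A ++ [:: x] ++ rcons B y) catA -catA.
  by rewrite subseq3 // mem_cat mem_head orbT.
- move: t_uniq; rewrite def_seg_t cat_uniq => /and3P[_ /hasPn/(_ z z_C)].
  by rewrite -eq_bz mem_cat inE b_in !orbT.
Qed.

Lemma sorts_SC_3_21P t : is_perm t ->
  west_s (SC_3_21 t) = iota 1 (size t) <-> avoids_123_132 t.
Proof.
move=> t_perm; have t_uniq : uniq t by rewrite (perm_uniq t_perm) iota_uniq.
have sortsE : west_s (SC_3_21 t) = iota 1 (size t) <-> sorted leq (west_s (SC_3_21 t)).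
  split=> [->|sorted_t]; first exact: iota_sorted.
  apply: (sorted_eq leq_trans anti_leq) => //; first exact: iota_sorted.
  by rewrite (perm_trans (SC_perm _ _ _)) // (perm_trans (SC_perm _ _ _)).
rewrite sortsE west_s_sortedP avoids_123_132P //.
split=> [no231|[no12_3 no132]].
  have no12_3 : ~ has12_3 t by move/SC_3_21_231.
  by split=> //; rewrite -has231_rev -SC_3_21_rev.
by rewrite SC_3_21_rev // has231_rev.
Qed.

Lemma avoids_123_132_contains pi tau :
  avoids_123_132 pi -> contains pi tau -> avoids_123_132 tau.
Proof.
move=> pi_avoid pi_tau x y z /(contains_subseq pi_tau)[s' sub_s'].
case: s' sub_s' => [|x' [|y' [|z' [|? ?]]]] // sub_s' iso.
have := pi_avoid x' y' z' sub_s'; move: iso; rewrite /order_iso /=; lia.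
Qed.

Theorem mainTheorem16 :
  perm_class (Sort_SC [:: 3; 2; 1] [:: false; true; true]).
Proof.
split=> [pi [pi_size [pi_perm _]] // | pi tau [_ [pi_perm pi_sorts]] tau_size tau_perm pi_tau].
split=> //; split=> //; apply/(sorts_SC_3_21P tau_perm).
by apply: avoids_123_132_contains pi_tau; apply/(sorts_SC_3_21P pi_perm).
Qed.
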